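(* Let $\hat K$ be a knot. The linking form of $\hat K\#\hat K$ has trivial isotropic cone (i.e. $\Lambda_0(\hat K\#\hat K)=\{0\}$) if and only if $\det(\hat K)$ is a product of distinct primes, each of which is congruent to $3\bmod 4$.
   Context: For a knot $K\subset S^3$, $D_K$ is the double branched cover of $S^3$ over $K$; $H_1(D_K;\mathbb{Z})$ is finite of odd order $\det(K)=|\Delta_K(-1)|$, and $\lambda:H_1(D_K)\times H_1(D_K)\to\mathbb{Q}/\mathbb{Z}$ is the standard symmetric non-degenerate linking form. The isotropic cone is $\Lambda_0(K)=\{g\in H_1(D_K):\lambda(g,g)=0\}$. $\hat K\#\hat K$ is the connected sum of $\hat K$ with itself (so its $H_1$ with linking form is the orthogonal sum of two copies of that of $\hat K$). *)

From mathcomp Require Import all_boot all_order all_algebra.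
Set Implicit Arguments. Unset Strict Implicit. Unset Printing Implicit Defensive.
Import Order.TTheory GRing.Theory Num.Theory.
Local Open Scope ring_scope.

(* Q/Z-valued forms are represented by rat-valued functions, read modulo
   the integers: a value q : rat stands for its class in Q/Z, and
   "q = 0 in Q/Z" is "q \is a Num.int". *)
Definition qz_zero (q : rat) : bool := q \is a Num.int.

Definition linking_form (G : finZmodType) (lam : G -> G -> rat) : Prop :=
  [/\ (forall x y, qz_zero (lam x y - lam y x)),
      (forall x y z, qz_zero (lam (x + y) z - (lam x z + lam y z)))
    & (forall x, x != 0 -> exists y, ~~ qz_zero (lam x y)) ].

Definition double_form (G : finZmodType) (lam : G -> G -> rat)
  : (G * G)%type -> (G * G)%type -> rat :=
  fun u v => lam u.1 v.1 + lam u.2 v.2.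

Definition trivial_isotropic_cone (H : zmodType) (lam : H -> H -> rat)
  : Prop := forall g : H, qz_zero (lam g g) -> g = 0.

Definition distinct_primes_3mod4 (n : nat) : Prop :=
  exists s : seq nat, [/\ uniq s, all prime s,
    all (fun p => p %% 4 == 3)%N s & n = (\prod_(p <- s) p)%N ].

From mathcomp Require Import all_boot all_order all_algebra all_fingroup all_solvable all_field.
From mathcomp Require Import zify ring.
Set Implicit Arguments. Unset Strict Implicit. Unset Printing Implicit Defensive.

(* If |G| is a product of distinct primes p = 3 mod 4, then for every p the
   p-torsion of G is cyclic of order p, and nondegeneracy forces
   lam(x, x) <> 0 in Q/Z on its generators.  An isotropic pair (x, y) with
   x != 0 is moved into the p-torsion, for a prime p dividing the order of x,
   by multiplying by |G|/p;
   there y = c x, so (1 + c^2) lam(x, x) = 0, which is impossible because -1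
   is not a square mod p.
   Conversely, a prime p = 1 mod 4 gives the isotropic pair (x, t x) with x of
   order p and t^2 = -1 mod p.  If p^2 divides |G|, either some v has order
   p^2 and (p v, 0) is isotropic, or the p-torsion contains a plane; after
   diagonalising lam on it, the fact that every element of F_p is a sum of two
   squares yields an isotropic vector. *)

Lemma distinct_primes_3mod4P n : 0 < n ->
  distinct_primes_3mod4 n <->
  forall p, prime p -> p %| n -> p %% 4 = 3 /\ logn p n <= 1.
Proof.
move=> n_gt0; split=> [[s [s_uniq s_prime s_3mod4 n_prod]] p p_pr p_dvd | n_fact].
  have p_s : p \in s.
    move: p_dvd; rewrite n_prod Euclid_dvd_prod // big_has => /hasP[q q_s].
    by rewrite dvdn_prime2 // ?(allP s_prime q q_s) // => /eqP->.
  split; first exact/eqP/(allP s_3mod4).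
  rewrite leqNgt -pfactor_dvdn // -mulnn n_prod (bigD1_seq p) //= dvdn_pmul2l ?prime_gt0 //.
  rewrite Euclid_dvd_prod // big_has_cond; apply/hasPn => q q_s /=.
  by rewrite dvdn_prime2 // ?(allP s_prime q q_s) // eq_sym andNb.
exists (primes n); split.
- exact: primes_uniq.
- by apply/allP => p; rewrite mem_primes => /andP[].
- by apply/allP => p; rewrite mem_primes => /and3P[p_pr _ /(n_fact p p_pr)[-> _]].
- rewrite {1}(prod_prime_decomp n_gt0) prime_decompE big_map /=.
  apply: eq_big_seq => p; rewrite mem_primes => /and3P[p_pr _ p_dvd].
  have [_ logn_le1] := n_fact p p_pr p_dvd.
  have : 0 < logn p n by rewrite logn_gt0 mem_primes p_pr n_gt0.
  by case: (logn p n) logn_le1 => [|[|]].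
Qed.

Lemma coprime_divn_prime p n : prime p -> 0 < n -> p %| n -> logn p n <= 1 ->
  coprime p (n %/ p).
Proof.
by move=> p_pr n_gt0 p_dvd; rewrite prime_coprime // dvdn_divRL // mulnn pfactor_dvdn // -ltnNge.
Qed.

Import Order.TTheory GRing.Theory Num.Theory FinRing.Theory.
Local Open Scope ring_scope.

Lemma Fp_natr_eq0 p n : prime p -> ((n%:R : 'F_p) == 0) = (p %| n)%N.
Proof. by move=> p_pr; rewrite -(dvdn_pcharf (pchar_Fp p_pr)). Qed.

Lemma Fp_fact_halves p : prime p -> odd p ->
  ((p.-1)`!%:R : 'F_p) = (-1) ^+ p./2 * (p./2)`!%:R ^+ 2.
Proof.
move=> p_pr p_odd; set h := p./2.
have p_eq : p = (h + h).+1 by rewrite addnn /h -{1}(odd_double_half p) p_odd.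
have -> : p.-1 = h + h by rewrite [in LHS]p_eq.
rewrite !fact_prod !big_add1 /= !big_mkord !natr_prod big_split_ord /=.
rewrite [X in _ * X](reindex_inj rev_ord_inj) expr2 mulrCA; congr (_ * _).
rewrite -[h in (-1) ^+ h]card_ord -prodrN; apply: eq_bigr => i _ /=.
have i_lt := ltn_ord i; rewrite -[RHS]add0r -(pchar_Fp_0 p_pr) -natrB; last lia.
by congr _%:R; lia.
Qed.

(* Lagrange: by Wilson's theorem, ((p - 1)/2)! is a square root of -1. *)
Lemma dvdn_sqr_add1 p : prime p -> (p %% 4 = 1)%N -> exists t, (p %| t ^ 2 + 1)%N.
Proof.
move=> p_pr p_mod4; exists (p./2)`!.
have p_odd : odd p by lia.
have half_even : ~~ odd p./2 by lia.
have := Wilson (prime_gt1 p_pr); rewrite p_pr => /esym.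
rewrite -!Fp_natr_eq0 // -[(p.-1)`!.+1]addn1 !natrD Fp_fact_halves // natrX.
by rewrite -signr_odd (negPf half_even) mul1r.
Qed.

Lemma ndvdn_sqr_add1 p c : prime p -> (p %% 4 = 3)%N -> ~~ (p %| c ^ 2 + 1)%N.
Proof.
move=> p_pr p_mod4; rewrite -Fp_natr_eq0 // natrD natrX addr_eq0; apply/negP.
set b : 'F_p := c%:R => /eqP sq_b.
have b_neq0 : b != 0.
  by apply: contra_eqN sq_b => /eqP->; rewrite expr0n eq_sym oppr_eq0 oner_eq0.
have p_eq : p = (2 * (2 * (p %/ 4) + 1)).+1 by lia.
have := expf_card b; rewrite card_Fp // [X in b ^+ X]p_eq exprS exprM sq_b.
rewrite -signr_odd oddD oddM /= expr1 mulrN1 => /eqP.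
rewrite eq_sym -addr_eq0 -mulr2n -mulr_natl mulf_eq0 (negPf b_neq0) orbF Fp_natr_eq0 //.
by rewrite dvdn_prime2 // => /eqP p_eq2; rewrite p_eq2 in p_mod4.
Qed.

Lemma Fp_sqr_inj p (i j : nat) : prime p -> (i.*2 < p)%N -> (j.*2 < p)%N ->
  (i%:R ^+ 2 : 'F_p) = j%:R ^+ 2 -> i = j.
Proof.
move=> p_pr lt_i lt_j /eqP; rewrite -subr_eq0 subr_sqr mulf_eq0 subr_eq0 -natrD.
case/orP => [/eqP/(congr1 val) | ].
  by rewrite /= !val_Fp_nat // !modn_small //; lia.
rewrite Fp_natr_eq0 //; have [|ij_gt0 /(dvdn_leq ij_gt0)] := posnP (i + j); lia.
Qed.

Lemma Fp_sum_two_sqr p (e : 'F_p) : prime p -> odd p ->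
  exists i k : nat, i%:R ^+ 2 + k%:R ^+ 2 = e.
Proof.
move=> p_pr p_odd; set h := p./2.
have p_eq : p = h.*2.+1 by rewrite /h -{1}(odd_double_half p) p_odd.
have lt_h (i : 'I_h.+1) : ((i : nat).*2 < p)%N by rewrite p_eq ltnS leq_double -ltnS.
pose is_sum (ik : 'I_h.+1 * 'I_h.+1) := ik.1%:R ^+ 2 + ik.2%:R ^+ 2 == e.
have [[i k] /eqP sum_ik | no_sum] := pickP is_sum; first by exists i, k.
(* Otherwise the h + 1 squares i^2 and the h + 1 values e - k^2, 0 <= i, k <= h,
   would be 2 h + 2 = p + 1 distinct elements of F_p. *)
pose F (s : 'I_h.+1 + 'I_h.+1) : 'F_p :=
  match s with inl i => i%:R ^+ 2 | inr k => e - k%:R ^+ 2 end.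
suff F_inj : injective F.
  have := leq_card F F_inj; rewrite card_sum !card_ord (Fp_cast p_pr).
  by move=> card_le; exfalso; lia.
have sqr_inj (i j : 'I_h.+1) : i%:R ^+ 2 = j%:R ^+ 2 :> 'F_p -> i = j.
  by move/(Fp_sqr_inj p_pr (lt_h i) (lt_h j)) => /val_inj.
case=> [i|k] [j|l] /=.
- by move/sqr_inj->.
- move/eqP; rewrite eq_sym subr_eq eq_sym => sum_il.
  by have := no_sum (i, l); rewrite /is_sum /= sum_il.
- move/eqP; rewrite subr_eq => /eqP sum_jk.
  by have := no_sum (j, k); rewrite /is_sum /= -sum_jk eqxx.
- by move/addrI/eqP; rewrite eqr_opp => /eqP/sqr_inj->.
Qed.

Lemma qz_zeroD a b : qz_zero a -> qz_zero b -> qz_zero (a + b).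
Proof. exact: rpredD. Qed.

Lemma qz_zeroMn n a : qz_zero a -> qz_zero (n%:R * a).
Proof. by move=> a_int; rewrite /qz_zero rpredM ?natr_int. Qed.

Lemma qz_zero_nat n : qz_zero n%:R.
Proof. exact: natr_int. Qed.

Lemma qz_zero_coprime m n r : coprime m n ->
  qz_zero (m%:R * r) -> qz_zero (n%:R * r) -> qz_zero r.
Proof.
move=> co_mn mr_int nr_int; have [u [v]] := Bezoutz m n.
rewrite /gcdz /= (eqP co_mn) => uv_int.
have uv : u%:~R * m%:R + v%:~R * n%:R = 1 :> rat.
  by have := congr1 (fun z : int => z%:~R : rat) uv_int; rewrite /= intrD !intrM.
by rewrite -[r]mul1r -uv mulrDl -!mulrA /qz_zero rpredD // rpredM ?intr_int.
Qed.

Definition eqmodZ (a b : rat) : bool := qz_zero (a - b).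

Lemma eqmodZ_refl a : eqmodZ a a.
Proof. by rewrite /eqmodZ subrr /qz_zero int_num0. Qed.

Lemma eqmodZ_sym a b : eqmodZ a b -> eqmodZ b a.
Proof. by rewrite /eqmodZ -opprB /qz_zero rpredN. Qed.

Lemma eqmodZ_trans a b c : eqmodZ a b -> eqmodZ b c -> eqmodZ a c.
Proof. by move=> ab bc; rewrite /eqmodZ -[a](subrK b) -addrA qz_zeroD. Qed.

Lemma eqmodZD a b c d : eqmodZ a b -> eqmodZ c d -> eqmodZ (a + c) (b + d).
Proof. by move=> ab cd; rewrite /eqmodZ opprD addrACA qz_zeroD. Qed.

Lemma eqmodZMn n a b : eqmodZ a b -> eqmodZ (n%:R * a) (n%:R * b).
Proof. by move=> ab; rewrite /eqmodZ -mulrBr qz_zeroMn. Qed.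

Lemma eqmodZ_qz_zero a b : eqmodZ a b -> qz_zero a = qz_zero b.
Proof.
move=> ab; apply/idP/idP => [a_int | b_int].
  by rewrite -(subKr a b) /qz_zero rpredB.
by rewrite -[a](subrK b) qz_zeroD.
Qed.

Lemma qz_zero_divn c p : (0 < p)%N -> (p %| c)%N -> qz_zero (c%:R / p%:R).
Proof.
by move=> p_gt0 /dvdnP[q ->]; rewrite natrM mulfK ?qz_zero_nat ?pnatr_eq0 -?lt0n.
Qed.

Section BiadditiveForm.

Variables (G : zmodType) (lam : G -> G -> rat).
Hypothesis lamC : forall x y, eqmodZ (lam x y) (lam y x).
Hypothesis lamDl : forall x y z, eqmodZ (lam (x + y) z) (lam x z + lam y z).

Lemma lamDr x y z : eqmodZ (lam z (x + y)) (lam z x + lam z y).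
Proof.
apply: eqmodZ_trans (lamC _ _) _; apply: eqmodZ_trans (lamDl _ _ _) _.
by apply: eqmodZD; apply: lamC.
Qed.

Lemma lamBr x y z : eqmodZ (lam z (x - y)) (lam z x - lam z y).
Proof.
have := lamDr (x - y) y z; rewrite subrK => lamD_xy.
rewrite /eqmodZ (_ : _ - _ = - (lam z x - (lam z (x - y) + lam z y))); last by ring.
by rewrite /qz_zero rpredN.
Qed.

Lemma lam0l y : qz_zero (lam 0 y).
Proof.
have := lamDl 0 0 y; rewrite addr0 /eqmodZ opprD addrA subrr add0r.
by rewrite /qz_zero rpredN.
Qed.

Lemma lamMnl x y n : eqmodZ (lam (x *+ n) y) (n%:R * lam x y).
Proof.
elim: n => [|n IHn]; first by rewrite mulr0n mul0r /eqmodZ subr0 lam0l.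
rewrite mulrSr -addn1 natrD mulrDl mul1r.
exact: eqmodZ_trans (lamDl _ _ _) (eqmodZD IHn (eqmodZ_refl _)).
Qed.

Lemma lamMnr x y n : eqmodZ (lam x (y *+ n)) (n%:R * lam x y).
Proof.
apply: eqmodZ_trans (lamC _ _) _; apply: eqmodZ_trans (lamMnl _ _ _) _.
exact/eqmodZMn/lamC.
Qed.

Lemma lamMn x y i j : eqmodZ (lam (x *+ i) (y *+ j)) ((i * j)%:R * lam x y).
Proof.
apply: eqmodZ_trans (lamMnl _ _ _) _; rewrite natrM -mulrA.
exact/eqmodZMn/lamMnr.
Qed.

Lemma lam_torsion x z n : x *+ n = 0 -> qz_zero (n%:R * lam x z).
Proof. by move=> xn0; rewrite -(eqmodZ_qz_zero (lamMnl x z n)) xn0 lam0l. Qed.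

Lemma lam_torsion_frac u v p : (0 < p)%N -> u *+ p = 0 ->
  exists c : nat, eqmodZ (lam u v) (c%:R / p%:R).
Proof.
move=> p_gt0 up0; have /intrP[m m_eq] := lam_torsion v up0.
have p_neq0 : p%:R != 0 :> rat by rewrite pnatr_eq0 -lt0n.
have pz_neq0 : p%:Z != 0 by rewrite -lt0n.
exists `|(m %% p)%Z|%N.
rewrite /eqmodZ pmulrn gez0_abs ?modz_ge0 //.
have -> : lam u v = m%:~R / p%:R by rewrite -m_eq mulrC mulKf.
rewrite {1}(divz_eq m p) -mulrBl intrD addrK intrM -[(p%:Z)%:~R]pmulrn mulfK //.
exact: intr_int.
Qed.

Lemma lam_orthogonalize a b A B s :
  eqmodZ (lam a a) (A%:R * s) -> eqmodZ (lam a b) (B%:R * s) ->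
  qz_zero (lam a (b *+ A - a *+ B)).
Proof.
move=> aa ab; rewrite (eqmodZ_qz_zero (lamBr _ _ _)).
have abA : eqmodZ (lam a (b *+ A)) ((A * B)%:R * s).
  by apply: eqmodZ_trans (lamMnr _ _ _) _; rewrite natrM -mulrA; apply: eqmodZMn.
have aaB : eqmodZ (lam a (a *+ B)) ((A * B)%:R * s).
  by apply: eqmodZ_trans (lamMnr _ _ _) _; rewrite mulnC natrM -mulrA; apply: eqmodZMn.
exact: eqmodZ_trans abA (eqmodZ_sym aaB).
Qed.

Lemma lam_orthogonal_sqr u v i j : qz_zero (lam u v) ->
  eqmodZ (lam (u *+ i + v *+ j) (u *+ i + v *+ j))
         ((i * i)%:R * lam u u + (j * j)%:R * lam v v).
Proof.
move=> uv_int.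
have vu_int : qz_zero (lam v u) by rewrite -(eqmodZ_qz_zero (lamC u v)).
have cross x y k l : qz_zero (lam x y) -> eqmodZ (lam (x *+ k) (y *+ l)) 0.
  move=> xy_int; apply: eqmodZ_trans (lamMn _ _ _ _) _.
  by rewrite /eqmodZ subr0 qz_zeroMn.
apply: eqmodZ_trans (lamDl _ _ _) _.
rewrite -[_ * lam u u]addr0 -[_ * lam v v]add0r.
by apply: eqmodZD; apply: eqmodZ_trans (lamDr _ _ _) _; apply: eqmodZD;
  rewrite ?lamMn ?cross.
Qed.

End BiadditiveForm.

Section FiniteZmodule.

Variable G : finZmodType.
Implicit Types (p : nat) (a b u x z : G).

Lemma mulrn_card u : u *+ #|G| = 0.
Proof. by rewrite -zmodXgE -cardsT expg_cardG ?inE. Qed.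

Lemma order_ptorsion p x : prime p -> x *+ p = 0 -> x != 0 -> #[x]%g = p.
Proof.
move=> p_pr xp0 x_neq0; have : (#[x]%g %| p)%N by rewrite order_dvdn zmodXgE xp0.
case/primeP: p_pr => _ /[apply] /orP[|/eqP //].
by rewrite order_eq1 zmod1gE (negPf x_neq0).
Qed.

Lemma mem_group_mulrn p (H : {group G}) x j : prime p -> x *+ p = 0 ->
  ~~ (p %| j)%N -> x *+ j \in H -> x \in H.
Proof.
move=> p_pr xp0 p_ndvd xj_H; have [->|x_neq0] := eqVneq x 0; first exact: group1.
have : generator <[x]> (x ^+ j).
  by rewrite generator_coprime (order_ptorsion p_pr xp0 x_neq0) prime_coprime.
by move/eqP => x_gen; rewrite -cycle_subG x_gen cycle_subG.
Qed.

Lemma ptorsion_in_Sylow p (S : {group G}) u : prime p ->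
  (p.-Sylow([set: G]) S)%g -> u *+ p = 0 -> u \in S.
Proof.
move=> p_pr S_Syl up0.
have S_nrm : (S <| [set: G])%g by rewrite -sub_abelian_normal ?subsetT ?zmod_abelian.
rewrite (mem_normal_Hall S_Syl S_nrm (in_setT u)) /p_elt.
by apply: (@pnat_dvd _ p); rewrite ?pnat_id // order_dvdn zmodXgE up0.
Qed.

Lemma mem_cycle_ptorsion p x u : prime p -> (logn p #|G| <= 1)%N ->
  x *+ p = 0 -> x != 0 -> u *+ p = 0 -> u \in <[x]>%g.
Proof.
move=> p_pr logn_le1 xp0 x_neq0 up0; have [S S_Syl] := Sylow_exists p [set: G].
suff -> : <[x]>%g = S by exact: ptorsion_in_Sylow S_Syl up0.
apply/eqP; rewrite eqEcard cycle_subG (ptorsion_in_Sylow p_pr S_Syl xp0) /=.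
rewrite -orderE (order_ptorsion p_pr xp0 x_neq0) (card_Hall S_Syl) cardsT p_part.
by rewrite -[X in (_ <= X)%N](expn1 p) leq_exp2l ?prime_gt1.
Qed.

Lemma ptorsion_independent p a b i j : prime p -> a *+ p = 0 -> b *+ p = 0 ->
  a != 0 -> b \notin <[a]>%g -> a *+ i + b *+ j = 0 -> (p %| i)%N && (p %| j)%N.
Proof.
move=> p_pr ap0 bp0 a_neq0 b_notin ab0.
have p_dvd_j : (p %| j)%N.
  apply: contraR b_notin => p_ndvd_j; apply: (mem_group_mulrn p_pr bp0 p_ndvd_j).
  have -> : b *+ j = ((a ^+ i)^-1)%g.
    by rewrite zmodVgE zmodXgE; apply/eqP; rewrite -addr_eq0 addrC ab0.
  by rewrite groupV mem_cycle.
rewrite p_dvd_j andbT -(order_ptorsion p_pr ap0 a_neq0) order_dvdn zmodXgE.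
by move/dvdnP: p_dvd_j ab0 => [q ->]; rewrite mulnC mulrnA bp0 mul0rn addr0 => ->.
Qed.

Lemma mulrn_card_div_ptorsion p u : (p %| #|G|)%N -> u *+ (#|G| %/ p) *+ p = 0.
Proof. by move=> p_dvd; rewrite -mulrnA divnK // mulrn_card. Qed.

Lemma mulrn_card_div_neq0 p x : prime p -> (p %| #[x]%g)%N ->
  (logn p #|G| <= 1)%N -> x *+ (#|G| %/ p) != 0.
Proof.
move=> p_pr p_dvd_x logn_le1.
have p_dvd : (p %| #|G|)%N by rewrite (dvdn_trans p_dvd_x) // -cardsT order_dvdG ?inE.
have G_gt0 : (0 < #|G|)%N by apply/card_gt0P; exists 0.
have co_pm := coprime_divn_prime p_pr G_gt0 p_dvd logn_le1.
apply: contraTneq co_pm => xm0; rewrite prime_coprime // negbK.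
by rewrite (dvdn_trans p_dvd_x) // order_dvdn zmodXgE xm0.
Qed.

Lemma exists_sqr_torsion p z : prime p -> (p.-elt z)%g -> z *+ p != 0 ->
  exists v : G, v *+ (p * p) = 0 /\ v *+ p != 0.
Proof.
move=> p_pr /p_natP[e ord_z] zp_neq0.
have e_gt1 : (1 < e)%N.
  rewrite ltnNge; apply: contra zp_neq0 => e_le1.
  by rewrite -zmodXgE -order_dvdn ord_z -{2}(expn1 p) dvdn_exp2l.
exists (z *+ p ^ (e - 2)); split.
  by rewrite -mulrnA mulnn -expnD subnK // -ord_z -zmodXgE expg_order.
rewrite -mulrnA -expnSr -zmodXgE -order_dvdn ord_z dvdn_Pexp2l ?prime_gt1 //.
by rewrite -ltnNge; lia.
Qed.

End FiniteZmodule.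

Section FiniteBiadditiveForm.

Variables (G : finZmodType) (lam : G -> G -> rat).
Hypothesis lamC : forall x y, eqmodZ (lam x y) (lam y x).
Hypothesis lamDl : forall x y z, eqmodZ (lam (x + y) z) (lam x z + lam y z).
Implicit Types (p : nat) (a b u v x y z : G).

Lemma not_trivial_cone x y : (x, y) != 0 -> qz_zero (lam x x + lam y y) ->
  ~ trivial_isotropic_cone (double_form lam).
Proof. by move=> xy_neq0 xy_int triv; rewrite (triv (x, y) xy_int) eqxx in xy_neq0. Qed.

Lemma not_trivial_cone1 x : x != 0 -> qz_zero (lam x x) ->
  ~ trivial_isotropic_cone (double_form lam).
Proof.
move=> x_neq0 xx_int; apply: (@not_trivial_cone x 0).
  by apply: contraNneq x_neq0 => /(congr1 fst) /= ->.
by rewrite qz_zeroD // (lam0l lamDl).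
Qed.

Lemma lam_ptorsion_nonisotropic p x :
  (forall x, x != 0 -> exists y, ~~ qz_zero (lam x y)) ->
  prime p -> (logn p #|G| <= 1)%N -> x *+ p = 0 -> x != 0 -> ~~ qz_zero (lam x x).
Proof.
move=> nondeg p_pr logn_le1 xp0 x_neq0; apply/negP => xx_int.
have [z /negP] := nondeg x x_neq0; apply.
(* lam(x, z) is killed by p, and by m = |G|/p since m z lies in <[x]>. *)
have p_dvd : (p %| #|G|)%N.
  by rewrite -(order_ptorsion p_pr xp0 x_neq0) -cardsT order_dvdG ?inE.
have G_gt0 : (0 < #|G|)%N by apply/card_gt0P; exists 0.
have co_pm := coprime_divn_prime p_pr G_gt0 p_dvd logn_le1.
apply: (qz_zero_coprime co_pm (lam_torsion lamDl z xp0)).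
have := mem_cycle_ptorsion p_pr logn_le1 xp0 x_neq0 (mulrn_card_div_ptorsion z p_dvd).
case/cycleP => c; rewrite zmodXgE => zm.
rewrite -(eqmodZ_qz_zero (lamMnr lamC lamDl x z _)) zm.
by rewrite (eqmodZ_qz_zero (lamMnr lamC lamDl x x c)) qz_zeroMn.
Qed.

Lemma ptorsion_sum_sqr_3mod4 p x y : prime p -> (p %% 4 = 3)%N ->
  (logn p #|G| <= 1)%N -> x *+ p = 0 -> x != 0 -> y *+ p = 0 ->
  qz_zero (lam x x + lam y y) -> qz_zero (lam x x).
Proof.
move=> p_pr p_mod4 logn_le1 xp0 x_neq0 yp0 xy_int.
have := mem_cycle_ptorsion p_pr logn_le1 xp0 x_neq0 yp0.
case/cycleP => c; rewrite zmodXgE => y_eq.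
have co_cp : coprime (1 + c * c) p.
  by rewrite coprime_sym prime_coprime // addnC mulnn ndvdn_sqr_add1.
apply: (qz_zero_coprime co_cp _ (lam_torsion lamDl x xp0)).
rewrite natrD mulrDl mul1r.
by rewrite -(eqmodZ_qz_zero (eqmodZD (eqmodZ_refl _) (lamMn lamC lamDl x x c c))) -y_eq.
Qed.

Lemma trivial_cone_squarefree_3mod4 :
  (forall x, x != 0 -> exists y, ~~ qz_zero (lam x y)) ->
  (forall p, prime p -> (p %| #|G|)%N -> (p %% 4 = 3)%N /\ (logn p #|G| <= 1)%N) ->
  trivial_isotropic_cone (double_form lam).
Proof.
move=> nondeg G_fact.
suff no_iso x y : x != 0 -> ~~ qz_zero (lam x x + lam y y).
  move=> [x y]; rewrite /double_form /= => xy_int.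
  have [x0 | x_neq0] := eqVneq x 0; last by case/negP: (no_iso x y x_neq0).
  have [y0 | y_neq0] := eqVneq y 0; first by rewrite x0 y0.
  by case/negP: (no_iso y x y_neq0); rewrite addrC.
move=> x_neq0; set p := pdiv #[x]%g.
have p_pr : prime p by rewrite pdiv_prime // order_gt1 zmod1gE.
have p_dvd : (p %| #|G|)%N by rewrite (dvdn_trans (pdiv_dvd _)) // -cardsT order_dvdG ?inE.
have [p_mod4 logn_le1] := G_fact p p_pr p_dvd.
have xm_neq0 := mulrn_card_div_neq0 p_pr (pdiv_dvd _) logn_le1.
have xmp0 := mulrn_card_div_ptorsion x p_dvd.
apply: contra (lam_ptorsion_nonisotropic nondeg p_pr logn_le1 xmp0 xm_neq0) => xy_int.
apply: (ptorsion_sum_sqr_3mod4 p_pr p_mod4 logn_le1 xmp0 xm_neq0 (mulrn_card_div_ptorsion y p_dvd)).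
rewrite (eqmodZ_qz_zero (eqmodZD (lamMn lamC lamDl x x _ _) (lamMn lamC lamDl y y _ _))).
by rewrite -mulrDr qz_zeroMn.
Qed.

Lemma not_trivial_cone_1mod4 p : prime p -> (p %% 4 = 1)%N -> (p %| #|G|)%N ->
  ~ trivial_isotropic_cone (double_form lam).
Proof.
move=> p_pr p_mod4 p_dvd.
have [x _ ord_x] : {x | x \in [set: G] & #[x]%g = p} by apply: Cauchy; rewrite ?cardsT.
have xp0 : x *+ p = 0 by rewrite -ord_x -zmodXgE expg_order.
have x_neq0 : x != 0 by rewrite -zmod1gE -order_gt1 ord_x prime_gt1.
have [t /dvdnP[w tw]] := dvdn_sqr_add1 p_pr p_mod4.
apply: (@not_trivial_cone x (x *+ t)).
  by apply: contraNneq x_neq0 => /(congr1 fst) /= ->.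
rewrite (eqmodZ_qz_zero (eqmodZD (eqmodZ_refl _) (lamMn lamC lamDl x x t t))).
have -> : lam x x + (t * t)%:R * lam x x = w%:R * (p%:R * lam x x).
  by rewrite mulrA -natrM -tw natrD natrX; ring.
exact/qz_zeroMn/(lam_torsion lamDl x xp0).
Qed.

Lemma not_trivial_cone_sqr_torsion n v : v *+ (n * n) = 0 -> v *+ n != 0 ->
  ~ trivial_isotropic_cone (double_form lam).
Proof.
move=> vnn0 vn_neq0; apply: (not_trivial_cone1 vn_neq0).
by rewrite (eqmodZ_qz_zero (lamMn lamC lamDl v v n n)) (lam_torsion lamDl v vnn0).
Qed.

Lemma not_trivial_cone_orthogonal p a b A D : prime p -> odd p ->
  a *+ p = 0 -> b *+ p = 0 -> a != 0 -> b \notin <[a]>%g -> qz_zero (lam a b) ->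
  eqmodZ (lam a a) (A%:R / p%:R) -> eqmodZ (lam b b) (D%:R / p%:R) -> ~~ (p %| D)%N ->
  ~ trivial_isotropic_cone (double_form lam).
Proof.
move=> p_pr p_odd ap0 bp0 a_neq0 b_notin ab_int aa bb p_ndvd_D.
(* With j^2 + l^2 = -A D mod p, the pair (D a + j b, l b) has value
   D (D A + j^2 + l^2) / p. *)
have [j [l jl]] := Fp_sum_two_sqr (- (A * D)%:R) p_pr p_odd.
have p_dvd : (p %| D * (D * A + (j * j + l * l)))%N.
  by rewrite dvdn_mull // -Fp_natr_eq0 // !natrD !natrM -!expr2 jl natrM mulrC subrr.
apply: (@not_trivial_cone (a *+ D + b *+ j) (a *+ 0 + b *+ l)).
  apply: contraNneq p_ndvd_D => /(congr1 fst) /=.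
  by case/(ptorsion_independent p_pr ap0 bp0 a_neq0 b_notin)/andP.
rewrite (eqmodZ_qz_zero (eqmodZD (lam_orthogonal_sqr lamC lamDl D j ab_int)
                                 (lam_orthogonal_sqr lamC lamDl 0 l ab_int))).
rewrite (eqmodZ_qz_zero (eqmodZD (eqmodZD (eqmodZMn _ aa) (eqmodZMn _ bb))
                                 (eqmodZD (eqmodZMn _ aa) (eqmodZMn _ bb)))).
have -> : (D * D)%:R * (A%:R / p%:R) + (j * j)%:R * (D%:R / p%:R) +
          ((0 * 0)%:R * (A%:R / p%:R) + (l * l)%:R * (D%:R / p%:R)) =
          (D * (D * A + (j * j + l * l)))%:R / p%:R :> rat.
  by rewrite !(natrM, natrD); ring.
exact: qz_zero_divn (prime_gt0 p_pr) p_dvd.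
Qed.

Lemma not_trivial_cone_ptorsion_plane p a b : prime p -> odd p ->
  a *+ p = 0 -> b *+ p = 0 -> a != 0 -> b \notin <[a]>%g ->
  ~ trivial_isotropic_cone (double_form lam).
Proof.
move=> p_pr p_odd ap0 bp0 a_neq0 b_notin; have p_gt0 := prime_gt0 p_pr.
have [A aa] := lam_torsion_frac lamDl a p_gt0 ap0.
have [B ab] := lam_torsion_frac lamDl b p_gt0 ap0.
have [p_dvd_A | p_ndvd_A] := boolP (p %| A)%N.
  by apply: (not_trivial_cone1 a_neq0); rewrite (eqmodZ_qz_zero aa) qz_zero_divn.
(* Gram-Schmidt: lam(a, a) = A/p and lam(a, b) = B/p, so b' is orthogonal to a. *)
pose b' := b *+ A - a *+ B.
have b'p0 : b' *+ p = 0.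
  by rewrite mulrnBl -!mulrnA ![(_ * p)%N]mulnC !mulrnA ap0 bp0 !mul0rn subr0.
have b'_notin : b' \notin <[a]>%g.
  apply: contra b_notin => b'_in; apply: (mem_group_mulrn p_pr bp0 p_ndvd_A).
  have -> : b *+ A = (b' * a ^+ B)%g by rewrite zmodMgE zmodXgE subrK.
  by rewrite groupM ?mem_cycle.
have ab'_int : qz_zero (lam a b') := lam_orthogonalize lamC lamDl aa ab.
have [D b'b'] := lam_torsion_frac lamDl b' p_gt0 b'p0.
have [p_dvd_D | p_ndvd_D] := boolP (p %| D)%N; last first.
  exact: not_trivial_cone_orthogonal p_pr p_odd ap0 b'p0 a_neq0 b'_notin ab'_int aa b'b' p_ndvd_D.
have b'_neq0 : b' != 0 by apply: contraNneq b'_notin => ->; exact: group1.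
by apply: (not_trivial_cone1 b'_neq0); rewrite (eqmodZ_qz_zero b'b') qz_zero_divn.
Qed.

Lemma not_trivial_cone_logn p : prime p -> odd p -> (1 < logn p #|G|)%N ->
  ~ trivial_isotropic_cone (double_form lam).
Proof.
move=> p_pr p_odd logn_gt1; have [S S_Syl] := Sylow_exists p [set: G].
have S_big : (p < #|S|)%N.
  rewrite (card_Hall S_Syl) cardsT p_part -[X in (X < _)%N](expn1 p).
  by rewrite ltn_exp2l // prime_gt1.
have [/existsP[z /andP[z_S zp_neq0]] | S_ptors] := boolP [exists z in S, z *+ p != 0].
  have z_pelt := mem_p_elt (pHall_pgroup S_Syl) z_S.
  have [v [vpp0 vp_neq0]] := exists_sqr_torsion p_pr z_pelt zp_neq0.
  exact: not_trivial_cone_sqr_torsion vpp0 vp_neq0.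
have ptors u : u \in S -> u *+ p = 0.
  move=> u_S; apply/eqP; move: S_ptors; rewrite negb_exists => /forallP/(_ u).
  by rewrite u_S negbK.
have [a a_S a_neq0] : exists2 a, a \in S & a != 0.
  by apply/trivgPn; apply: contraTneq S_big => ->; rewrite cards1 -leqNgt prime_gt0.
have ap0 := ptors a a_S.
have [b b_S b_notin] : exists2 b, b \in S & b \notin <[a]>%g.
  apply/subsetPn; apply: contraTN S_big => /subset_leq_card.
  by rewrite -orderE (order_ptorsion p_pr ap0 a_neq0) -leqNgt.
exact: not_trivial_cone_ptorsion_plane p_pr p_odd ap0 (ptors b b_S) a_neq0 b_notin.
Qed.

End FiniteBiadditiveForm.

Theorem mainTheorem4 (G : finZmodType) (lam : G -> G -> rat) :
  odd #|G| -> linking_form lam ->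
  (trivial_isotropic_cone (double_form lam) <-> distinct_primes_3mod4 #|G|).
Proof.
move=> G_odd [lamC lamDl nondeg].
rewrite distinct_primes_3mod4P ?odd_gt0 //; split=> [triv p p_pr p_dvd | G_fact].
  have p_odd : odd p.
    by move: G_odd; apply: contraLR; rewrite -!dvdn2 => /dvdn_trans; apply.
  split; last first.
    by rewrite leqNgt; apply/negP => /(not_trivial_cone_logn lamC lamDl p_pr p_odd).
  have [] // : (p %% 4 = 1 \/ p %% 4 = 3)%N by lia.
  by move/(not_trivial_cone_1mod4 lamC lamDl p_pr)/(_ p_dvd).
exact: trivial_cone_squarefree_3mod4 lamC lamDl nondeg G_fact.
Qed.
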